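(* There exists a constant $S_{\min}$ such that for all positive integers $m$ and all $p\in(0,1]$ with $mp\ge S_{\min}$, if $X\sim\mathrm{Bin}(m,p)$, then \[E[\ln(1+X)]\ge \ln(1+mp)-\frac{11}{12}\cdot\frac{1-p}{mp}.\]
   Context: $\mathrm{Bin}(m,p)$ denotes the binomial distribution with $m$ trials and success probability $p$. *)

From Stdlib Require Import Reals.
Open Scope R_scope.

Definition binom_pmf (m : nat) (p : R) (k : nat) : R :=
  C m k * p ^ k * (1 - p) ^ (m - k).

Definition E_ln1p_binom (m : nat) (p : R) : R :=
  sum_f_R0 (fun k => binom_pmf m p k * ln (1 + INR k)) m.

(* For [a > 0] the function [y |-> ln y - (ln a + 1/3 + 2/3 (y/a - 1) - (y/a - 1)^2/6 - a/(3y))]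
   has derivative [(y/a - 1)^3 a/(3 y^2)], so it is minimised at [y = a] where it vanishes.
   Taking [y = 1 + X] and [a = 1 + mp] gives a lower bound for [ln (1 + X)] that is a
   combination of [1], [X], [X^2] and [1/(1 + X)] with a nonpositive last coefficient.
   The first two moments of the binomial law are explicit and [E[1/(1+X)] <= 1/((m+1)p)],
   and the resulting bound [ln(1 + mp) - (1/2) (1-p)/(mp)] holds for every [mp > 0]. *)

From Stdlib Require Import Reals Lra Lia.
From Coquelicot Require Import Coquelicot.
Open Scope R_scope.

Lemma le_at_1_of_deriv_sign (f f' : R -> R) :
  (forall c, 0 < c -> derivable_pt_lim f c (f' c)) ->
  (forall c, 0 < c -> 0 <= (c - 1) * f' c) ->
  forall u, 0 < u -> f 1 <= f u.
Proof.
  intros Hd Hsign u Hu.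
  destruct (Rtotal_order u 1) as [Hlt|[->|Hgt]]; [| lra |].
  - destruct (MVT_cor2 f f' u 1 Hlt) as [c [Hfc Hc]].
    { intros c Hc; apply Hd; lra. }
    specialize (Hsign c ltac:(lra)). nra.
  - destruct (MVT_cor2 f f' 1 u Hgt) as [c [Hfc Hc]].
    { intros c Hc; apply Hd; lra. }
    specialize (Hsign c ltac:(lra)). nra.
Qed.

Lemma ln_ge_rational (u : R) : 0 < u ->
  ln u >= 1/3 + 2/3 * (u - 1) - (u - 1)^2 / 6 - 1 / (3 * u).
Proof.
  intro Hu.
  set (h := fun x => ln x - 1/3 - 2/3 * (x - 1) + (x - 1)^2 / 6 + 1 / (3 * x)).
  assert (Hmin : h 1 <= h u).
  { apply (le_at_1_of_deriv_sign h (fun x => (x - 1)^3 / (3 * x^2))); [| | exact Hu].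
    - intros c Hc. apply is_derive_Reals. unfold h.
      auto_derive; [lra|]. field. lra.
    - intros c Hc.
      replace ((c - 1) * ((c - 1)^3 / (3 * c^2))) with (((c - 1)^2)^2 / (3 * c^2))
        by (field; lra).
      apply Rle_mult_inv_pos; [apply pow2_ge_0 | nra]. }
  unfold h in Hmin. rewrite ln_1 in Hmin. lra.
Qed.

Lemma ln_ge_rational_at (a y : R) : 0 < a -> 0 < y ->
  ln y >= ln a + (1/3 + 2/3 * (y/a - 1) - (y/a - 1)^2 / 6 - a / (3 * y)).
Proof.
  intros Ha Hy.
  pose proof (ln_ge_rational (y/a) (Rdiv_lt_0_compat _ _ Hy Ha)) as H.
  replace (1 / (3 * (y/a))) with (a / (3 * y)) in H by (field; lra).
  replace y with (a * (y/a)) at 1 by (field; lra).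
  rewrite ln_mult by (try apply Rdiv_lt_0_compat; lra).
  lra.
Qed.

Lemma binom_pmf_ge0 (m : nat) (p : R) (k : nat) : 0 <= p <= 1 -> 0 <= binom_pmf m p k.
Proof.
  intro Hp. unfold binom_pmf.
  apply Rmult_le_pos; [apply Rmult_le_pos|]; try (apply pow_le; lra).
  left. unfold Binomial.C.
  apply Rdiv_lt_0_compat; [|apply Rmult_lt_0_compat]; apply INR_fact_lt_0.
Qed.

Lemma binom_pmf_sum (m : nat) (p : R) : sum_f_R0 (fun k => binom_pmf m p k * 1) m = 1.
Proof.
  transitivity ((p + (1 - p)) ^ m).
  - rewrite binomial. apply sum_eq. intros; unfold binom_pmf; ring.
  - replace (p + (1 - p)) with 1 by ring. apply pow1.
Qed.

Lemma C_succ_mul (n k : nat) :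
  INR (S k) * Binomial.C (S n) (S k) = INR (S n) * Binomial.C n k.
Proof.
  unfold Binomial.C. replace (S n - S k)%nat with (n - k)%nat by lia.
  change (Factorial.fact (S n)) with (S n * Factorial.fact n)%nat.
  change (Factorial.fact (S k)) with (S k * Factorial.fact k)%nat.
  rewrite !mult_INR.
  pose proof (INR_fact_neq_0 n). pose proof (INR_fact_neq_0 k).
  pose proof (INR_fact_neq_0 (n - k)). pose proof (not_0_INR (S k) (Nat.neq_succ_0 k)).
  field. auto.
Qed.

Lemma binom_sum_size_bias (n : nat) (p : R) (f : nat -> R) :
  sum_f_R0 (fun k => binom_pmf (S n) p k * (INR k * f k)) (S n)
  = INR (S n) * p * sum_f_R0 (fun j => binom_pmf n p j * f (S j)) n.
Proof.
  rewrite decomp_sum by lia. simpl pred.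
  rewrite scal_sum. simpl INR at 1. rewrite Rmult_0_l, Rmult_0_r, Rplus_0_l.
  apply sum_eq. intros k Hk. unfold binom_pmf.
  replace (S n - S k)%nat with (n - k)%nat by lia.
  transitivity ((INR (S k) * Binomial.C (S n) (S k)) * p * p ^ k * (1 - p)^(n - k) * f (S k)).
  - simpl pow. ring.
  - rewrite C_succ_mul. ring.
Qed.

Lemma binom_mean (n : nat) (p : R) :
  sum_f_R0 (fun k => binom_pmf (S n) p k * INR k) (S n) = INR (S n) * p.
Proof.
  transitivity (sum_f_R0 (fun k => binom_pmf (S n) p k * (INR k * 1)) (S n)).
  - apply sum_eq; intros; ring.
  - rewrite (binom_sum_size_bias n p (fun _ => 1)), binom_pmf_sum. ring.
Qed.

Lemma binom_second_moment (n : nat) (p : R) :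
  sum_f_R0 (fun k => binom_pmf (S n) p k * (INR k * INR k)) (S n)
  = INR (S n) * p * (INR n * p + 1).
Proof.
  rewrite binom_sum_size_bias. f_equal.
  transitivity (sum_f_R0 (fun j => binom_pmf n p j * INR j + binom_pmf n p j * 1) n).
  - apply sum_eq; intros; rewrite S_INR; ring.
  - rewrite sum_plus, binom_pmf_sum. destruct n.
    + unfold binom_pmf. simpl. ring.
    + rewrite binom_mean. ring.
Qed.

(* Size biasing backwards: [(n+1) p E[1/(1+Y)] = P(X >= 1) <= 1] with [X ~ Bin(n+1,p)]. *)
Lemma binom_inv_succ_le (n : nat) (p : R) : 0 < p <= 1 ->
  INR (S n) * p * sum_f_R0 (fun k => binom_pmf n p k * / (1 + INR k)) n <= 1.
Proof.
  intro Hp.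
  replace (sum_f_R0 (fun k => binom_pmf n p k * / (1 + INR k)) n)
    with (sum_f_R0 (fun k => binom_pmf n p k * (fun j => / INR j) (S k)) n)
    by (apply sum_eq; intros; rewrite S_INR, Rplus_comm; reflexivity).
  rewrite <- (binom_sum_size_bias n p (fun j => / INR j)), <- (binom_pmf_sum (S n) p).
  apply sum_Rle. intros [|k] _; apply Rmult_le_compat_l; try (apply binom_pmf_ge0; lra).
  - simpl; lra.
  - rewrite Rinv_r; [lra | apply not_0_INR; lia].
Qed.

Lemma binom_expect_ge (n : nat) (p c0 c1 c2 c3 : R) : 0 < p <= 1 -> c3 <= 0 ->
  let mu := INR (S n) * p in
  sum_f_R0 (fun k => binom_pmf (S n) p k *
              (c0 + c1 * INR k + c2 * (INR k * INR k) + c3 * / (1 + INR k))) (S n)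
  >= c0 + c1 * mu + c2 * (mu * (mu - p + 1)) + c3 / (mu + p).
Proof.
  intros Hp Hc3 mu.
  assert (Hmu : 0 < mu) by (apply Rmult_lt_0_compat; [apply lt_0_INR; lia | lra]).
  set (E := fun g : nat -> R => sum_f_R0 (fun k => binom_pmf (S n) p k * g k) (S n)).
  assert (Hlin : sum_f_R0 (fun k => binom_pmf (S n) p k *
              (c0 + c1 * INR k + c2 * (INR k * INR k) + c3 * / (1 + INR k))) (S n)
     = c0 * E (fun _ => 1) + c1 * E INR + c2 * E (fun k => INR k * INR k)
       + c3 * E (fun k => / (1 + INR k))).
  { unfold E. rewrite !scal_sum, <- !sum_plus. apply sum_eq; intros; ring. }
  assert (Hinv : E (fun k => / (1 + INR k)) <= / (mu + p)).
  { pose proof (binom_inv_succ_le (S n) p Hp) as H.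
    replace (INR (S (S n)) * p) with (mu + p) in H by (unfold mu; rewrite (S_INR (S n)); ring).
    apply (Rmult_le_reg_l (mu + p)); [lra|]. rewrite Rinv_r; [exact H | lra]. }
  rewrite Hlin. unfold E. rewrite binom_pmf_sum, binom_mean, binom_second_moment.
  fold mu. replace (INR n * p) with (mu - p) by (unfold mu; rewrite S_INR; ring).
  unfold Rdiv.
  assert (0 <= - c3 * (/ (mu + p) - E (fun k => / (1 + INR k))))
    by (apply Rmult_le_pos; lra).
  unfold E in *. lra.
Qed.

Lemma E_ln1p_binom_ge (n : nat) (p : R) : 0 < p <= 1 ->
  let mu := INR (S n) * p in
  E_ln1p_binom (S n) p >= ln (1 + mu) + 1/3 - mu * (1 - p) / (6 * (1 + mu)^2)
                          - (1 + mu) / (3 * (mu + p)).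
Proof.
  intros Hp mu.
  assert (Hmu : 0 < mu) by (apply Rmult_lt_0_compat; [apply lt_0_INR; lia | lra]).
  set (a := 1 + mu).
  pose proof (binom_expect_ge n p (ln a + 1/3 + 2/3 * (1/a - 1) - (1/a - 1)^2 / 6)
                (2 / (3 * a) - (1/a - 1) / (3 * a)) (- 1 / (6 * a^2)) (- a / 3) Hp
                ltac:(unfold a; lra)) as H.
  cbv zeta in H. fold mu in H.
  replace (ln a + 1/3 - mu * (1 - p) / (6 * a^2) - a / (3 * (mu + p)))
    with (ln a + 1/3 + 2/3 * (1/a - 1) - (1/a - 1)^2 / 6 + (2 / (3 * a) - (1/a - 1) / (3 * a)) * mu
          + - 1 / (6 * a^2) * (mu * (mu - p + 1)) + - a / 3 / (mu + p))
    by (unfold a; field; lra).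
  apply Rge_trans with (2 := H).
  unfold E_ln1p_binom. apply Rle_ge, sum_Rle. intros k _.
  apply Rmult_le_compat_l; [apply binom_pmf_ge0; lra|].
  pose proof (pos_INR k).
  apply Rge_le. eapply Rge_trans; [apply (ln_ge_rational_at a (1 + INR k)); unfold a; lra|].
  right. unfold a. field. lra.
Qed.

Theorem theorem5 :
  exists Smin : R,
    forall (m : nat) (p : R),
      (0 < m)%nat -> 0 < p <= 1 -> INR m * p >= Smin ->
      E_ln1p_binom m p >= ln (1 + INR m * p) - 11 / 12 * ((1 - p) / (INR m * p)).
Proof.
  exists 0. intros [|n] p Hm Hp _; [lia|].
  pose proof (E_ln1p_binom_ge n p Hp) as H. cbv zeta in H.
  set (mu := INR (S n) * p) in *.
  assert (Hmu : 0 < mu) by (apply Rmult_lt_0_compat; [apply lt_0_INR; lia | lra]).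
  assert (Hquad : mu * (1 - p) / (6 * (1 + mu)^2) <= (1 - p) / (6 * mu)).
  { apply Rmult_le_reg_r with (r := 6 * (1 + mu)^2 * mu); [nra|].
    field_simplify; [|lra|lra]. nra. }
  assert (Hinv : (1 + mu) / (3 * (mu + p)) <= 1/3 + (1 - p) / (3 * mu)).
  { replace ((1 + mu) / (3 * (mu + p))) with (1/3 + (1 - p) / (3 * (mu + p))) by (field; lra).
    apply Rplus_le_compat_l, Rmult_le_compat_l; [lra|].
    apply Rinv_le_contravar; lra. }
  assert (Hsum : (1 - p) / (6 * mu) + (1 - p) / (3 * mu) <= 11 / 12 * ((1 - p) / mu)).
  { replace ((1 - p) / (6 * mu) + (1 - p) / (3 * mu)) with (1/2 * ((1 - p) / mu)) by (field; lra).
    apply Rmult_le_compat_r; [apply Rle_mult_inv_pos|]; lra. }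
  lra.
Qed.
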